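(* Let $E$ be a finite-dimensional complex Hilbert space, $e\in E$ a unit vector, $\tau\in(0,1)$, and let $T_0\in B(E)_+$ be strictly positive. Define $$T_{n+1}:=T_n^{1/2}\bigl(I_E-\tau|e\rangle\langle e|\bigr)T_n^{1/2}\qquad(n\ge0),$$ and $T_\infty:=\lim_nT_n$. Let $\mathcal{K}$ be the maximal $T_0$-reducing subspace contained in $e^\perp$, and assume $\dim\mathcal{K}^\perp=2$. Then, with respect to $E=\mathcal{K}\oplus\mathcal{K}^\perp$, $$T_\infty=T_0|_{\mathcal{K}}\oplus0.$$
   Context: For vectors $x,y$, $|x\rangle\langle y|$ denotes the operator $z\mapsto\langle y,z\rangle x$. $B(E)_+$ denotes positive operators; $T^{1/2}$ is the positive square root. A subspace reduces an operator if it and its orthogonal complement are invariant. The sequence $(T_n)$ is decreasing in the operator order, so the norm limit exists. *)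

(* complex numbers are R[i] (mathcomp-real-closed) over a
   realType R; operators on the d-dimensional Hilbert space E = 'cV[R[i]]_d
   are d x d matrices acting on column vectors. *)
From HB Require Import structures.
From mathcomp Require Import all_boot all_order all_algebra.
From mathcomp Require Import sesquilinear.
From mathcomp Require Import reals.
From mathcomp Require Import complex.
From Stdlib Require Import ClassicalEpsilon.
Set Implicit Arguments. Unset Strict Implicit. Unset Printing Implicit Defensive.
Import Order.TTheory GRing.Theory Num.Theory.
Local Open Scope ring_scope.

Section Defs.
Variable R : realType.
Local Notation C := (R[i]).
Variable d : nat.
Local Notation vec := 'cV[C]_d.
Local Notation op := 'M[C]_d.

Definition adjmx m n (A : 'M[C]_(m, n)) : 'M[C]_(n, m) := map_mx Num.conj (A ^T).

(* inner product <y, z> = y^* z, conjugate-linear in the first argument *)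
Definition inner (y z : vec) : C := (adjmx y *m z) 0 0.

Definition ketbra (x y : vec) : op := x *m adjmx y.

Definition posop (A : op) : Prop :=
  adjmx A = A /\ forall v : vec, 0 <= inner v (A *m v).

(* strictly positive operators (positive and invertible; in finite dimension
   equivalently positive definite) *)
Definition strictly_posop (A : op) : Prop :=
  adjmx A = A /\ forall v : vec, v != 0 -> 0 < inner v (A *m v).

(* the positive square root T^{1/2}: the (unique) positive S with S S = T
   (chosen by Hilbert's epsilon; default irrelevant for non-positive T) *)
Definition psqrt (T : op) : op :=
  epsilon (inhabits 0) (fun S : op => posop S /\ S *m S = T).

(* norm convergence of a sequence of operators (entrywise; all norms on the
   finite-dimensional space B(E) are equivalent) *)
Definition op_cvg (T : nat -> op) (L : op) : Prop :=
  forall eps : C, 0 < eps -> exists N : nat, forall n : nat, (N <= n)%N ->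
    forall i j, `|T n i j - L i j| < eps.

Definition orthv (K : {vspace vec}) (v : vec) : Prop :=
  forall k : vec, k \in K -> inner k v = 0.

Definition invariant (A : op) (P : vec -> Prop) : Prop :=
  forall v : vec, P v -> P (A *m v).

Definition reduces (A : op) (K : {vspace vec}) : Prop :=
  invariant A (fun v => v \in K) /\ invariant A (orthv K).

Definition sub_perp (K : {vspace vec}) (e : vec) : Prop :=
  forall k : vec, k \in K -> inner e k = 0.

Definition max_reducing_in_perp (A : op) (e : vec) (K : {vspace vec}) : Prop :=
  [/\ reduces A K, sub_perp K e &
      forall K' : {vspace vec}, reduces A K' -> sub_perp K' e -> (K' <= K)%VS].

Definition dim_orth (K : {vspace vec}) (n : nat) : Prop :=
  exists W : {vspace vec}, (forall v : vec, v \in W <-> orthv K v) /\ \dim W = n.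

End Defs.

(** Since [K] reduces [T0], every iterate [T_n] agrees with [T0] on [K] and
    leaves the plane [K^perp = span {e, f}] invariant, so the iteration is a
    recursion on 2 x 2 positive matrices.  On that plane write
    [T_n^{1/2} e = x e + z f] and [T_n^{1/2} f = z^* e + y f].  The entries of
    [T_n] are [a = x^2 + |z|^2], [b = y^2 + |z|^2], [c = (x + y) z], and
    [T_{n+1} = T_n - tau |T_n^{1/2} e><T_n^{1/2} e|] reads
    [a' = a - tau x^2], [b' = b - tau |z|^2], [c' = c - tau x z].
    Maximality of [K] forces [c_0 <> 0].  The determinant [x y - |z|^2] of
    [T_n^{1/2}] shrinks by the factor [sqrt (1 - tau) <= 1 - tau/2], which makes
    [|c_n| / (x_n + y_n)^2] nondecreasing; so [|z_n| >= k (x_n + y_n)] for a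
    fixed [k > 0], hence [b_n] decays geometrically and drags [a_n] and [c_n]
    to [0] with it. *)
From Pilot Require Import Defs.
From HB Require Import structures.
From mathcomp Require Import all_boot all_order all_algebra.
From mathcomp Require Import sesquilinear spectral reals complex.
From mathcomp Require Import ring lra.
From Stdlib Require Import ClassicalEpsilon.
Set Implicit Arguments. Unset Strict Implicit. Unset Printing Implicit Defensive.
Import Order.TTheory GRing.Theory Num.Theory.
Local Open Scope ring_scope.

Section Adjoint.
Variable R : realType.
Local Notation C := (R[i]).

Lemma ger0_conj (x : C) : 0 <= x -> x^* = x.
Proof. by move=> /ger0_real; apply: conj_Creal. Qed.

Lemma adjmxE m n (A : 'M[C]_(m, n)) i j : adjmx A i j = (A j i)^*.
Proof. by rewrite /adjmx !mxE. Qed.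

Lemma adjmxK m n (A : 'M[C]_(m, n)) : adjmx (adjmx A) = A.
Proof. by apply/matrixP => i j; rewrite !adjmxE conjCK. Qed.

Lemma adjmxM m n p (A : 'M[C]_(m, n)) (B : 'M[C]_(n, p)) :
  adjmx (A *m B) = adjmx B *m adjmx A.
Proof. by rewrite /adjmx trmx_mul map_mxM. Qed.

Lemma adjmxD m n (A B : 'M[C]_(m, n)) : adjmx (A + B) = adjmx A + adjmx B.
Proof. by apply/matrixP => i j; rewrite !mxE rmorphD. Qed.

Lemma adjmxB m n (A B : 'M[C]_(m, n)) : adjmx (A - B) = adjmx A - adjmx B.
Proof. by apply/matrixP => i j; rewrite !mxE rmorphB. Qed.

Lemma adjmxZ m n (a : C) (A : 'M[C]_(m, n)) : adjmx (a *: A) = a^* *: adjmx A.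
Proof. by apply/matrixP => i j; rewrite !mxE rmorphM. Qed.

Lemma adjmx1 n : adjmx (1%:M : 'M[C]_n) = 1%:M.
Proof. by rewrite /adjmx trmx1 map_mx1. Qed.

End Adjoint.

Section InnerProduct.
Variables (R : realType) (d : nat).
Local Notation C := (R[i]).
Local Notation vec := 'cV[C]_d.
Local Notation op := 'M[C]_d.

Lemma innerE (y z : vec) : inner y z = \sum_i (y i 0)^* * z i 0.
Proof. by rewrite /inner !mxE; apply: eq_bigr => i _; rewrite adjmxE. Qed.

Lemma inner_mulmx (y z : vec) (A : op) : inner y (A *m z) = inner (adjmx A *m y) z.
Proof. by rewrite /inner adjmxM adjmxK mulmxA. Qed.

Lemma inner_herm (A : op) : adjmx A = A ->
  forall y z : vec, inner y (A *m z) = inner (A *m y) z.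
Proof. by move=> hA y z; rewrite inner_mulmx hA. Qed.

Lemma conj_inner (y z : vec) : (inner y z)^* = inner z y.
Proof.
rewrite !innerE rmorph_sum; apply: eq_bigr => i _.
by rewrite rmorphM /= conjCK mulrC.
Qed.

Lemma innerDr (y z1 z2 : vec) : inner y (z1 + z2) = inner y z1 + inner y z2.
Proof. by rewrite /inner mulmxDr mxE. Qed.

Lemma innerBr (y z1 z2 : vec) : inner y (z1 - z2) = inner y z1 - inner y z2.
Proof. by rewrite /inner mulmxBr !mxE. Qed.

Lemma innerZr (y z : vec) a : inner y (a *: z) = a * inner y z.
Proof. by rewrite /inner -scalemxAr mxE. Qed.

Lemma inner0r (y : vec) : inner y 0 = 0.
Proof. by rewrite /inner mulmx0 mxE. Qed.

Lemma innerDl (y1 y2 z : vec) : inner (y1 + y2) z = inner y1 z + inner y2 z.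
Proof. by rewrite -conj_inner innerDr rmorphD /= !conj_inner. Qed.

Lemma innerBl (y1 y2 z : vec) : inner (y1 - y2) z = inner y1 z - inner y2 z.
Proof. by rewrite -conj_inner innerBr rmorphB /= !conj_inner. Qed.

Lemma innerZl (y z : vec) a : inner (a *: y) z = a^* * inner y z.
Proof. by rewrite -conj_inner innerZr rmorphM /= !conj_inner. Qed.

Lemma inner0l (y : vec) : inner 0 y = 0.
Proof. by rewrite -conj_inner inner0r rmorph0. Qed.

Lemma inner_self_ge0 (v : vec) : 0 <= inner v v.
Proof. by rewrite innerE; apply: sumr_ge0 => i _; rewrite mulrC mul_conjC_ge0. Qed.

Lemma inner_self_eq0 (v : vec) : inner v v = 0 -> v = 0.
Proof.
rewrite innerE => /eqP; rewrite psumr_eq0 => [/allP hv|i _]; last first.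
  by rewrite mulrC mul_conjC_ge0.
apply/matrixP => i j; rewrite ord1 mxE.
by have /implyP/(_ isT) := hv i (mem_index_enum _); rewrite mulrC mul_conjC_eq0 => /eqP.
Qed.

Lemma cauchy_schwarz (x y : vec) : inner x y * (inner x y)^* <= inner x x * inner y y.
Proof.
have [->|x0] := eqVneq x 0; first by rewrite !inner0l !mul0r.
have px : 0 < inner x x.
  by rewrite lt_def inner_self_ge0 andbT; apply: contra_neq x0 => /inner_self_eq0.
set p := inner x x; set a := inner x y.
have hyx : inner y x = a^* by rewrite /a conj_inner.
have := inner_self_ge0 (p *: y - a *: x).
rewrite !innerBl !innerBr !innerZl !innerZr -/p -/a hyx (ger0_conj (ltW px)).
have -> : p * (p * inner y y) - p * (a * a^*) - (a^* * (p * a) - a^* * (a * p))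
  = p * (p * inner y y - a * a^*) by ring.
by rewrite pmulr_rge0 // subr_ge0.
Qed.

Lemma unit_coord_le1 (v : vec) (i : 'I_d) : inner v v = 1 -> `|v i 0| <= 1.
Proof.
move=> hv; rewrite -(@expr_le1 _ 2) // normCKC -hv innerE (bigD1 i) //=.
by rewrite lerDl sumr_ge0 // => k _; rewrite mulrC mul_conjC_ge0.
Qed.

Lemma ketbraE (x y z : vec) : ketbra x y *m z = inner y z *: x.
Proof. by rewrite /ketbra -mulmxA [adjmx y *m z]mx11_scalar mul_mx_scalar. Qed.

Lemma ketbra_coef (x y : vec) i j : ketbra x y i j = x i 0 * (y j 0)^*.
Proof. by rewrite /ketbra !mxE big_ord1 adjmxE. Qed.

Lemma adjmx_ketbra (x y : vec) : adjmx (ketbra x y) = ketbra y x.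
Proof. by rewrite /ketbra adjmxM adjmxK. Qed.

Lemma mx_ext (A B : op) : (forall v : vec, A *m v = B *m v) -> A = B.
Proof.
move=> hAB; apply/matrixP => i j.
have := congr1 (fun v : vec => v i 0) (hAB (delta_mx j 0)).
by rewrite -!colE !mxE.
Qed.

End InnerProduct.

Section PositiveSqrt.
Variables (R : realType) (d : nat).
Local Notation C := (R[i]).
Local Notation vec := 'cV[C]_d.
Local Notation op := 'M[C]_d.

Lemma hermitian_spectral (H : op) : adjmx H = H ->
  exists U : op, exists2 s : 'rV[C]_d,
    U *m adjmx U = 1%:M & H = adjmx U *m diag_mx s *m U.
Proof.
move=> hH.
have hh : H \is hermsymmx by apply/is_hermitianmxP; rewrite expr0 scale1r; exact: esym hH.
have /orthomx_spectralP HE := hermitian_normalmx hh.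
have /unitarymxP hU := spectral_unitarymx H.
exists (spectralmx H), (spectral_diag H) => //.
by rewrite {1}HE invmx_unitary // spectral_unitarymx.
Qed.

Lemma inner_delta (i j : 'I_d) : inner (delta_mx i 0 : vec) (delta_mx j 0) = (i == j)%:R.
Proof.
rewrite innerE (bigD1 i) //= big1 => [|k ki]; last by rewrite !mxE (negbTE ki) /= rmorph0 mul0r.
by rewrite !mxE !eqxx /= conjC1 mul1r addr0 andbT.
Qed.

Lemma spectral_eigenvector (U : op) (s : 'rV[C]_d) (i : 'I_d) :
  U *m adjmx U = 1%:M ->
  let v := adjmx U *m (delta_mx i 0 : vec) in
  (adjmx U *m diag_mx s *m U) *m v = s 0 i *: v /\ inner v v = 1.
Proof.
move=> hU v; split.
  rewrite /v -!mulmxA [U *m (_ *m _)]mulmxA hU mul1mx mul_diag_mx.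
  rewrite scalemxAr; congr (_ *m _); apply/matrixP => a b; rewrite !mxE ord1 /=.
  by case: (a == i) / eqP => [->|_]; rewrite /= ?mulr0 ?mulr1 ?mulr0.
by rewrite /v inner_mulmx adjmxK mulmxA hU mul1mx inner_delta eqxx.
Qed.

Lemma posop_sqrt_exists (T : op) : posop T -> exists S : op, posop S /\ S *m S = T.
Proof.
case=> hA hpos; have [U [s hU hT]] := hermitian_spectral hA.
have s_ge0 i : 0 <= s 0 i.
  have [ev nv] := spectral_eigenvector s i hU.
  by have := hpos (adjmx U *m (delta_mx i 0 : vec)); rewrite hT ev innerZr nv mulr1.
pose r : 'rV[C]_d := \row_j sqrtC (s 0 j).
have adj_r : adjmx (diag_mx r) = diag_mx r.
  apply/matrixP => a b; rewrite adjmxE !mxE.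
  have [->|_] := eqVneq b a; first by rewrite !mulr1n ger0_conj // sqrtC_ge0.
  by rewrite !mulr0n rmorph0.
exists (adjmx U *m diag_mx r *m U); split; first split.
- by rewrite !adjmxM adjmxK adj_r mulmxA.
- move=> v; rewrite -!mulmxA inner_mulmx adjmxK innerE; apply: sumr_ge0 => i _.
  rewrite mul_diag_mx !mxE mulrCA; apply: mulr_ge0; first by rewrite sqrtC_ge0.
  by rewrite mulrC mul_conjC_ge0.
- rewrite -!mulmxA (mulmxA U) hU mul1mx (mulmxA (diag_mx r)) mulmx_diag.
  rewrite hT -!mulmxA; congr (_ *m (diag_mx _ *m _)); apply/matrixP => a j.
  by rewrite ord1 !mxE -expr2 sqrtCK.
Qed.

Lemma posop_quad_eq0 (S : op) (v : vec) : posop S -> inner v (S *m v) = 0 -> S *m v = 0.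
Proof.
move=> hS; have [Q [[hQ _] <-]] := posop_sqrt_exists hS.
by rewrite -mulmxA (inner_herm hQ) => /inner_self_eq0 ->; rewrite mulmx0.
Qed.

(* On a unit eigenvector [v] of [S1 - S2] with eigenvalue [s], the identity
   [S1^2 - S2^2 = S1 (S1 - S2) + (S1 - S2) S2] gives [s <v, (S1 + S2) v> = 0],
   and [<v, (S1 + S2) v> = 0] forces [S1 v = S2 v = 0], hence [s = 0] too. *)
Lemma posop_sqrt_unique (S1 S2 : op) :
  posop S1 -> posop S2 -> S1 *m S1 = S2 *m S2 -> S1 = S2.
Proof.
move=> h1 h2 h12; have hD : adjmx (S1 - S2) = S1 - S2 by rewrite adjmxB h1.1 h2.1.
have [U [s hU hDE]] := hermitian_spectral hD.
suff s0 : s = 0 by apply/eqP; rewrite -subr_eq0 hDE s0 linear0 mulmx0 mul0mx.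
apply/rowP => i; rewrite mxE.
have [ev nv] := spectral_eigenvector s i hU; rewrite -hDE in ev.
set v := adjmx U *m _ in ev nv.
have sE : s 0 i = inner v ((S1 - S2) *m v) by rewrite ev innerZr nv mulr1.
have sR : (s 0 i)^* = s 0 i by rewrite {1}sE conj_inner -(inner_herm hD).
have hkey : s 0 i * (inner v (S1 *m v) + inner v (S2 *m v)) = 0.
  have : inner (S1 *m v) (S1 *m v) - inner (S2 *m v) (S2 *m v) = 0.
    by rewrite -(inner_herm h1.1) -(inner_herm h2.1) !mulmxA h12 subrr.
  have -> : inner (S1 *m v) (S1 *m v) - inner (S2 *m v) (S2 *m v) =
      inner (S1 *m v) ((S1 - S2) *m v) + inner ((S1 - S2) *m v) (S2 *m v).
    by rewrite mulmxBl innerBr innerBl addrA subrK.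
  by rewrite ev innerZr innerZl sR -(inner_herm h1.1) mulrDr.
move/eqP: hkey; rewrite mulf_eq0 => /orP[/eqP //|].
rewrite paddr_eq0; [|exact: h1.2|exact: h2.2] => /andP[/eqP p1 /eqP p2].
by rewrite sE mulmxBl (posop_quad_eq0 h1 p1) (posop_quad_eq0 h2 p2) subrr inner0r.
Qed.

(* [J S J] is again a positive square root of [J T J = T]. *)
Lemma posop_sqrt_commute_involution (S T J : op) : posop S -> S *m S = T ->
  adjmx J = J -> J *m J = 1%:M -> J *m T = T *m J -> J *m S = S *m J.
Proof.
move=> hS hST hJ hJJ hJT.
have hS' : posop (J *m S *m J).
  split; first by rewrite !adjmxM hJ hS.1 mulmxA.
  by move=> v; rewrite -!mulmxA (inner_herm hJ); exact: hS.2.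
have JSJ2 : (J *m S *m J) *m (J *m S *m J) = S *m S.
  rewrite -!mulmxA (mulmxA J J) hJJ mul1mx (mulmxA S S) hST mulmxA hJT.
  by rewrite -mulmxA hJJ mulmx1.
by rewrite -{1}(posop_sqrt_unique hS' hS JSJ2) !mulmxA hJJ mul1mx.
Qed.

Lemma psqrt_spec (T : op) : posop T -> posop (psqrt T) /\ psqrt T *m psqrt T = T.
Proof.
move=> hT; apply: (@epsilon_spec _ (inhabits 0) (fun S : op => posop S /\ S *m S = T)).
exact: posop_sqrt_exists.
Qed.

End PositiveSqrt.

Section RealSequences.
Variable R : realType.

Lemma sqrt_contraction_le (tau u u' : R) : 0 < tau < 1 -> 0 <= u -> 0 <= u' ->
  u' ^+ 2 = (1 - tau) * u ^+ 2 -> 2 * u' <= (2 - tau) * u.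
Proof.
move=> /andP[tau0 tau1] u0 u'0 hu'.
have : (2 * u') ^+ 2 <= ((2 - tau) * u) ^+ 2.
  rewrite -subr_ge0.
  have -> : ((2 - tau) * u) ^+ 2 - (2 * u') ^+ 2 = (tau * u) ^+ 2 by rewrite !exprMn hu'; ring.
  exact: sqr_ge0.
rewrite ler_sqr // nnegrE; nra.
Qed.

Lemma contracting_cvg0 (th : R) (b : nat -> R) : 0 < th ->
  (forall n, 0 <= b n) -> (forall n, b n.+1 <= (1 - th) * b n) ->
  forall eps, 0 < eps -> exists N, forall n, (N <= n)%N -> b n < eps.
Proof.
move=> th0 b0 hb eps eps0.
have harmonic n : b n * (1 + n%:R * th) <= b 0%N.
  elim: n => [|n IH]; first by rewrite mul0r addr0 mulr1.
  apply: le_trans _ IH; rewrite -natr1.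
  have pos : 0 <= 1 + (n%:R + 1) * th by rewrite natr1 addr_ge0 ?ler01 ?mulr_ge0 ?ltW.
  apply: le_trans (ler_wpM2r pos (hb n)) _; rewrite -subr_ge0.
  have -> : b n * (1 + n%:R * th) - (1 - th) * b n * (1 + (n%:R + 1) * th) =
    b n * (th ^+ 2 * (n%:R + 1)) by ring.
  by rewrite mulr_ge0 // mulr_ge0 ?sqr_ge0 // addr_ge0.
have the : 0 < th * eps by rewrite mulr_gt0.
have [N hN] : exists N : nat, b 0%N < N%:R * (th * eps).
  exists (Num.Def.archi_bound (b 0%N / (th * eps))); rewrite -ltr_pdivrMr //.
  by apply: archi_boundP; rewrite divr_ge0 // ltW.
exists N => n hn; rewrite ltNge; apply/negP => hge.
have hNn : N%:R <= n%:R :> R by rewrite ler_nat.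
have pos : 0 <= 1 + n%:R * th by rewrite addr_ge0 // mulr_ge0 // ltW.
have h1 := ler_wpM2r pos hge.
have h2 : N%:R * (th * eps) <= n%:R * (th * eps) by rewrite ler_wpM2r // ltW.
have := harmonic n; nra.
Qed.

End RealSequences.

Section PlaneScalarDynamics.
Variables (R : realType) (tau : R) (x y w : nat -> R).
Hypothesis htau : 0 < tau < 1.
Hypotheses (x_ge0 : forall n, 0 <= x n) (y_ge0 : forall n, 0 <= y n).
Hypothesis w_ge0 : forall n, 0 <= w n.
Hypothesis det_ge0 : forall n, w n ^+ 2 <= x n * y n.
Hypothesis a_step : forall n,
  x n.+1 ^+ 2 + w n.+1 ^+ 2 = x n ^+ 2 + w n ^+ 2 - tau * x n ^+ 2.
Hypothesis b_step : forall n,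
  y n.+1 ^+ 2 + w n.+1 ^+ 2 = y n ^+ 2 + w n ^+ 2 - tau * w n ^+ 2.
Hypothesis c_step : forall n,
  (x n.+1 + y n.+1) * w n.+1 = (x n + y n - tau * x n) * w n.
Hypothesis c0_gt0 : 0 < (x 0%N + y 0%N) * w 0%N.

Let t n := x n + y n.
Let dt n := x n * y n - w n ^+ 2.
Let a n := x n ^+ 2 + w n ^+ 2.
Let b n := y n ^+ 2 + w n ^+ 2.
Let c n := t n * w n.

Let tau_gt0 : 0 < tau. Proof. by case/andP: htau. Qed.
Let a_ge0 n : 0 <= a n. Proof. by rewrite addr_ge0 ?sqr_ge0. Qed.
Let b_ge0 n : 0 <= b n. Proof. by rewrite addr_ge0 ?sqr_ge0. Qed.
Let dt_ge0 n : 0 <= dt n. Proof. by rewrite subr_ge0. Qed.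
Let trace_sqr n : t n ^+ 2 = a n + b n + 2 * dt n. Proof. by rewrite /t /a /b /dt; ring. Qed.

(* [dt] is the determinant of [T_n^{1/2}] on the plane, and [a b - c^2 = dt^2]. *)
Let dt_step n : dt n.+1 ^+ 2 = (1 - tau) * dt n ^+ 2.
Proof.
have -> : dt n.+1 ^+ 2 = a n.+1 * b n.+1 - c n.+1 ^+ 2 by rewrite /a /b /c /t /dt; ring.
by rewrite /a /b /c /t a_step b_step c_step /dt; ring.
Qed.

Let trace_step n : t n.+1 ^+ 2 <= t n * (t n - tau * x n).
Proof.
have := sqrt_contraction_le htau (dt_ge0 n) (dt_ge0 n.+1) (dt_step n).
rewrite trace_sqr /a /b a_step b_step /t /dt; nra.
Qed.

Let c_gt0 n : 0 < c n.
Proof.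
elim: n => [//|n IH]; rewrite /c /t c_step.
have : 0 < (1 - tau) * c n by rewrite mulr_gt0 // subr_gt0; case/andP: htau.
have : 0 <= tau * y n * w n by rewrite !mulr_ge0 // ltW.
rewrite /c /t; nra.
Qed.

Let t_gt0 n : 0 < t n.
Proof.
have := c_gt0 n; rewrite /c; have : 0 <= t n by rewrite addr_ge0.
by rewrite le0r => /orP[/eqP ->|//]; rewrite mul0r ltxx.
Qed.

Let k := c 0%N / t 0%N ^+ 2.
Let k_gt0 : 0 < k. Proof. by rewrite divr_gt0 // exprn_gt0. Qed.

(* [c / t^2] is nondecreasing, because [c' = (t - tau x) w] and [t'^2 <= t (t - tau x)]. *)
Let c_ge_trace n : k * t n ^+ 2 <= c n.
Proof.
elim: n => [|n IH]; first by rewrite /k divfK // expf_neq0 // gt_eqF.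
have tn2 : 0 < t n ^+ 2 by rewrite exprn_gt0.
have tn12 : 0 < t n.+1 ^+ 2 by rewrite exprn_gt0.
rewrite -(ler_pM2r tn2); apply: (le_trans (y := c n * t n.+1 ^+ 2)).
  by rewrite mulrAC ler_pM2r.
have -> : c n.+1 * t n ^+ 2 = (t n * (t n - tau * x n)) * c n by rewrite /c /t c_step; ring.
by rewrite mulrC ler_wpM2r ?trace_step // ltW.
Qed.

Let w_ge_trace n : k * t n <= w n.
Proof.
by rewrite -(ler_pM2l (t_gt0 n)) mulrCA -expr2; exact: c_ge_trace.
Qed.

Let b_contract n : b n.+1 <= (1 - tau * k ^+ 2) * b n.
Proof.
rewrite /b b_step.
have h1 : (k * t n) ^+ 2 <= w n ^+ 2.
  have := w_ge_trace n; have : 0 <= k * t n by rewrite mulr_ge0 ?ltW.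
  nra.
have h2 : k ^+ 2 * b n <= k ^+ 2 * t n ^+ 2.
  apply: ler_wpM2l; first exact: sqr_ge0.
  by rewrite trace_sqr; have := a_ge0 n; have := dt_ge0 n; lra.
rewrite exprMn in h1; rewrite /b in h2.
have := ler_wpM2l (ltW tau_gt0) (le_trans h2 h1); lra.
Qed.

Let a_le_b n : k ^+ 2 * a n <= b n.
Proof.
have [->|a_gt0] := eqVneq (a n) 0; first by rewrite mulr0.
have ka : k * a n <= c n.
  apply: le_trans (c_ge_trace n); apply: ler_wpM2l; first exact: ltW.
  by rewrite trace_sqr; have := b_ge0 n; have := dt_ge0 n; lra.
have : (k * a n) ^+ 2 <= a n * b n.
  apply: (le_trans (y := c n ^+ 2)).
    have : 0 <= k * a n by apply: mulr_ge0; [exact: ltW | exact: a_ge0].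
    nra.
  have -> : a n * b n = c n ^+ 2 + dt n ^+ 2 by rewrite /a /b /c /t /dt; ring.
  by rewrite lerDl sqr_ge0.
have := a_ge0 n; rewrite exprMn; nra.
Qed.

Let c_le_b n : k * c n <= b n.
Proof.
have : (k * c n) ^+ 2 <= b n ^+ 2.
  have -> : (k * c n) ^+ 2 = k ^+ 2 * (a n * b n - dt n ^+ 2).
    by rewrite /a /b /c /t /dt; ring.
  have := a_le_b n; have := b_ge0 n; have := k_gt0; nra.
by rewrite ler_sqr ?nnegrE // mulr_ge0 // ltW.
Qed.

Lemma plane_entries_cvg0 eps : 0 < eps -> exists N, forall n, (N <= n)%N ->
  (x n ^+ 2 + w n ^+ 2) + (y n ^+ 2 + w n ^+ 2) + 2 * ((x n + y n) * w n) < eps.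
Proof.
move=> eps0; pose M := 1 + k^-1 ^+ 2 + 2 * k^-1.
have M_gt0 : 0 < M by rewrite !addr_gt0 ?exprn_gt0 ?mulr_gt0 ?invr_gt0.
have th_gt0 : 0 < tau * k ^+ 2 by rewrite mulr_gt0 ?exprn_gt0.
have [N hN] := contracting_cvg0 th_gt0 b_ge0 b_contract (divr_gt0 eps0 M_gt0).
exists N => n /hN; rewrite ltr_pdivlMr // => hbn; apply: le_lt_trans hbn.
have ha : a n <= k^-1 ^+ 2 * b n.
  by rewrite exprVn mulrC ler_pdivlMr ?exprn_gt0 // mulrC a_le_b.
have hc : c n <= k^-1 * b n by rewrite mulrC ler_pdivlMr // mulrC c_le_b.
by rewrite -/(a n) -/(b n) -/(c n) /M; nra.
Qed.

End PlaneScalarDynamics.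

Section PlaneProjection.
Variables (R : realType) (d : nat).
Local Notation C := (R[i]).
Local Notation vec := 'cV[C]_d.

Definition plane_proj (e f v : vec) : vec := inner e v *: e + inner f v *: f.

Definition perp2 (e f v : vec) : Prop := inner e v = 0 /\ inner f v = 0.

Lemma ketbra_plane_proj (e f v : vec) :
  (ketbra e e + ketbra f f) *m v = plane_proj e f v.
Proof. by rewrite mulmxDl !ketbraE. Qed.

Lemma plane_projD (e f u v : vec) :
  plane_proj e f (u + v) = plane_proj e f u + plane_proj e f v.
Proof. by rewrite -!ketbra_plane_proj mulmxDr. Qed.

Lemma perp2_plane_proj (e f v : vec) : perp2 e f v -> plane_proj e f v = 0.
Proof. by move=> [he hf]; rewrite /plane_proj he hf !scale0r addr0. Qed.

Lemma inner_perp2_plane (e f k u : vec) :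
  perp2 e f k -> u = plane_proj e f u -> inner k u = 0.
Proof.
move=> [hk1 hk2] ->; rewrite /plane_proj innerDr !innerZr.
by rewrite -(conj_inner e) -(conj_inner f) hk1 hk2 conjC0 !mulr0 addr0.
Qed.

Variables (e f : vec).
Hypotheses (he : inner e e = 1) (hf : inner f f = 1) (hef : inner e f = 0).
Local Notation pr := (plane_proj e f).

Lemma inner_fe : inner f e = 0.
Proof. by rewrite -conj_inner hef conjC0. Qed.

Lemma inner_plane_proj v :
  [/\ inner e (pr v) = inner e v, inner f (pr v) = inner f v &
      forall u, inner (pr v) u = (inner e v)^* * inner e u + (inner f v)^* * inner f u].
Proof.
rewrite /plane_proj !innerDr !innerZr he hf hef inner_fe !mulr1 !mulr0 addr0 add0r.
by split => // u; rewrite innerDl !innerZl.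
Qed.

Lemma plane_proj_e : pr e = e.
Proof. by rewrite /plane_proj he inner_fe scale1r scale0r addr0. Qed.

Lemma plane_proj_f : pr f = f.
Proof. by rewrite /plane_proj hf hef scale1r scale0r add0r. Qed.

Lemma plane_proj_idem v : pr (pr v) = pr v.
Proof. by have [pe pf _] := inner_plane_proj v; rewrite {1}/plane_proj pe pf. Qed.

Lemma plane_proj_eq0 v : pr v = 0 -> perp2 e f v.
Proof.
have [pe pf _] := inner_plane_proj v.
by move=> h; split; [rewrite -pe | rewrite -pf]; rewrite h inner0r.
Qed.

Lemma perp2_subr_plane_proj v : perp2 e f (v - pr v).
Proof. by have [pe pf _] := inner_plane_proj v; split; rewrite innerBr ?pe ?pf subrr. Qed.

Lemma plane_of_orth_perp2 u : (forall k, perp2 e f k -> inner k u = 0) -> u = pr u.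
Proof.
move=> hu; have hr := perp2_subr_plane_proj u.
have : inner (u - pr u) (u - pr u) = 0.
  by rewrite innerBr hu // (inner_perp2_plane hr) ?plane_proj_idem ?subrr.
by move=> /inner_self_eq0 /eqP; rewrite subr_eq0 => /eqP.
Qed.

Lemma mem_lker_plane_proj v :
  v \in lker (linfun (mulmx (ketbra e e + ketbra f f))) <-> perp2 e f v.
Proof.
rewrite memv_ker lfunE /= ketbra_plane_proj.
by split => [/eqP/plane_proj_eq0 //|/perp2_plane_proj ->].
Qed.

End PlaneProjection.

Section MaximalReducingSubspace.
Variables (R : realType) (d : nat).
Local Notation C := (R[i]).
Local Notation vec := 'cV[C]_d.
Local Notation op := 'M[C]_d.

Lemma herm_invariant_reduces (A : op) (V : {vspace vec}) : adjmx A = A ->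
  Defs.invariant A (fun v => v \in V) -> reduces A V.
Proof.
move=> hA hinv; split => // v hv k hk.
by rewrite (inner_herm hA); apply: hv; apply: hinv.
Qed.

Lemma max_reducing_subv (T0 : op) (e : vec) (K V : {vspace vec}) :
  adjmx T0 = T0 -> max_reducing_in_perp T0 e K ->
  Defs.invariant T0 (fun v => v \in V) -> sub_perp V e -> (V <= K)%VS.
Proof. by move=> hT [_ _ hmax] hV hVe; apply: hmax => //; apply: herm_invariant_reduces. Qed.

Lemma mem_lker_ketbra (e v : vec) : e != 0 ->
  v \in lker (linfun (mulmx (ketbra e e))) <-> inner e v = 0.
Proof.
move=> e0; rewrite memv_ker lfunE /= ketbraE scaler_eq0 (negbTE e0) orbF.
by split => /eqP.
Qed.

Lemma unit_neq0 (e : vec) : inner e e = 1 -> e != 0.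
Proof. by apply: contra_eqN => /eqP ->; rewrite inner0r eq_sym oner_eq0. Qed.

Lemma orthonormal_completion (W : {vspace vec}) (e : vec) :
  inner e e = 1 -> e \in W -> \dim W = 2 ->
  exists f, [/\ inner f f = 1, inner e f = 0 & forall v, v \in W <-> v = plane_proj e f v].
Proof.
move=> he eW dimW; have e0 := unit_neq0 he.
have /subvPn [w wW we] : ~~ (W <= <[e]>)%VS.
  by apply/negP => /dimvS; rewrite dimW dim_vline e0.
pose f0 := w - inner e w *: e.
have ef0 : inner e f0 = 0 by rewrite innerBr innerZr he mulr1 subrr.
have f00 : f0 != 0.
  apply: contraNneq we => /eqP; rewrite subr_eq0 => /eqP ->.
  by rewrite memvZ ?memv_line.
have pf0 : 0 < inner f0 f0.
  by rewrite lt_def inner_self_ge0 andbT; apply: contra_neq f00 => /inner_self_eq0.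
pose r := sqrtC (inner f0 f0); have r_gt0 : 0 < r by rewrite sqrtC_gt0.
pose f := r^-1 *: f0.
have hf : inner f f = 1.
  rewrite innerZl innerZr ger0_conj ?invr_ge0 ?ltW // mulrA -expr2 exprVn.
  by rewrite /r sqrtCK mulVf // gt_eqF.
have hef : inner e f = 0 by rewrite innerZr ef0 mulr0.
have fW : f \in W by rewrite memvZ // memvB // memvZ.
clearbody f.
exists f; split => // v; split => [|->]; last first.
  by rewrite /plane_proj memvD // memvZ.
have sumW : (<[e]> + <[f]> == W)%VS.
  rewrite eqEdim subv_add -!memvE eW fW /= dimv_disjoint_sum ?dim_vline ?e0 ?unit_neq0 ?dimW //.
  apply/eqP; rewrite -subv0; apply/subvP => u /memv_capP [/vlineP [a ->] /vlineP [b hb]].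
  have : inner e (a *: e) = 0 by rewrite hb innerZr hef mulr0.
  by rewrite innerZr he mulr1 => ->; rewrite scale0r mem0v.
rewrite -(eqP sumW) => /memv_addP [_ /vlineP [a ->] [_ /vlineP [b ->] ->]].
by rewrite /plane_proj !innerDr !innerZr he hf hef (inner_fe hef) !mulr0 !mulr1 addr0 add0r.
Qed.

Variables (T0 : op) (e f : vec) (K : {vspace vec}).
Hypotheses (he : inner e e = 1) (hf : inner f f = 1) (hef : inner e f = 0).
Hypotheses (hT0 : adjmx T0 = T0) (hmax : max_reducing_in_perp T0 e K).
Hypothesis hKperp : forall v, orthv K v <-> v = plane_proj e f v.

Lemma max_reducing_plane_invariant v : v = plane_proj e f v -> T0 *m v = plane_proj e f (T0 *m v).
Proof. by move=> /hKperp hv; apply/hKperp; case: hmax => -[_ hred] _ _; apply: hred. Qed.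

Lemma max_reducing_perp2 v : v \in K <-> perp2 e f v.
Proof.
split=> [vK|].
  have [_ hsub _] := hmax.
  split; first exact: hsub.
  by rewrite -conj_inner (iffRL (hKperp f) (esym (plane_proj_f hf hef))) // conjC0.
move=> /(mem_lker_plane_proj he hf hef); apply/subvP: v.
apply: (max_reducing_subv hT0 hmax); last by move=> k /(mem_lker_plane_proj he hf hef) [].
move=> u /(mem_lker_plane_proj he hf hef) [hu1 hu2]; apply/(mem_lker_plane_proj he hf hef).
have plane_orth w : w = plane_proj e f w -> inner (T0 *m w) u = 0.
  move=> /max_reducing_plane_invariant ->; have [_ _ ->] := inner_plane_proj he hf hef (T0 *m w).
  by rewrite hu1 hu2 !mulr0 addr0.
by split; rewrite (inner_herm hT0) plane_orth ?(plane_proj_e he hef) ?(plane_proj_f hf hef).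
Qed.

(* If [T0 e] were parallel to [e], then [e^perp] would reduce [T0], so
   [e^perp <= K]; but [f] lies in both [e^perp] and [K^perp]. *)
Lemma max_reducing_coupling : inner f (T0 *m e) != 0.
Proof.
apply/eqP => hc; have e0 := unit_neq0 he.
have T0e : T0 *m e = inner e (T0 *m e) *: e.
  rewrite {1}(max_reducing_plane_invariant (esym (plane_proj_e he hef))).
  by rewrite /plane_proj hc scale0r addr0.
have : (lker (linfun (mulmx (ketbra e e))) <= K)%VS.
  apply: (max_reducing_subv hT0 hmax); last by move=> k /(mem_lker_ketbra _ e0).
  move=> u /(mem_lker_ketbra _ e0) hu; apply/(mem_lker_ketbra _ e0).
  by rewrite (inner_herm hT0) T0e innerZl hu mulr0.
move=> /subvP /(_ f) /(_ (iffRL (mem_lker_ketbra _ e0) hef)) /max_reducing_perp2 [_].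
by rewrite hf; apply/eqP; rewrite oner_eq0.
Qed.

End MaximalReducingSubspace.

Lemma norm_bilinear2_le (R : realType) (a b c c' p q r s : R[i]) :
  `|p| <= 1 -> `|q| <= 1 -> `|r| <= 1 -> `|s| <= 1 ->
  `|(a * p + c * q) * r + (c' * p + b * q) * s| <= `|a| + `|c| + `|c'| + `|b|.
Proof.
move=> hp hq hr hs.
have mul_le (u v : R[i]) : `|v| <= 1 -> `|u * v| <= `|u|.
  by move=> hv; rewrite normrM; apply: ler_piMr.
have lin_le (u v z1 z2 z : R[i]) : `|z1| <= 1 -> `|z2| <= 1 -> `|z| <= 1 ->
    `|(u * z1 + v * z2) * z| <= `|u| + `|v|.
  move=> h1 h2 h; apply: le_trans (mul_le _ _ h) _; apply: le_trans (ler_normD _ _) _.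
  by apply: lerD; apply: mul_le.
apply: le_trans (ler_normD _ _) _; rewrite -addrA.
by apply: lerD; exact: lin_le.
Qed.

Section Iteration.
Variables (R : realType) (d : nat).
Local Notation C := (R[i]).
Local Notation vec := 'cV[C]_d.
Local Notation op := 'M[C]_d.
Variables (e f : vec) (tau : R) (T0 : op) (T : nat -> op).
Hypotheses (he : inner e e = 1) (hf : inner f f = 1) (hef : inner e f = 0).
Hypothesis htau : 0 < tau < 1.
Hypothesis hT0 : posop T0.
Hypothesis hT0perp : forall v, perp2 e f v -> perp2 e f (T0 *m v).
Hypothesis hcoupling : inner f (T0 *m e) != 0.
Hypothesis hT00 : T 0%N = T0.
Hypothesis hT_succ : forall n,
  T n.+1 = psqrt (T n) *m (1%:M - (tau%:C)%C *: ketbra e e) *m psqrt (T n).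

Local Notation pr := (plane_proj e f).
Local Notation tauC := ((tau%:C)%C).
Let P : op := ketbra e e + ketbra f f.
Let S n := psqrt (T n).

Let PE v : P *m v = pr v. Proof. exact: ketbra_plane_proj. Qed.

Let agrees_off_plane (A : op) := posop A /\ forall k, perp2 e f k -> A *m k = T0 *m k.

Let plane_invariant (A : op) : agrees_off_plane A -> forall u, u = pr u -> A *m u = pr (A *m u).
Proof.
move=> [[hA _] hAT0] u hu; apply: plane_of_orth_perp2 => // k hk.
by rewrite (inner_herm hA) hAT0 // (inner_perp2_plane (hT0perp hk) hu).
Qed.

Let P_commute (A : op) : agrees_off_plane A -> P *m A = A *m P.
Proof.
move=> hA; apply: mx_ext => v; rewrite -!mulmxA !PE.
rewrite -[in A *m v](subrK (pr v) v) mulmxDr plane_projD.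
have hperp := perp2_subr_plane_proj he hf hef v.
rewrite hA.2 // (perp2_plane_proj (hT0perp hperp)) add0r.
by rewrite -plane_invariant ?plane_proj_idem.
Qed.

(* [P] commutes with [A] iff the reflection [J = P - (1 - P)] does, and [J]
   is a hermitian involution, to which [posop_sqrt_commute_involution] applies. *)
Let J : op := P - (1%:M - P).

Let P_idem : P *m P = P.
Proof. by apply: mx_ext => v; rewrite -mulmxA !PE plane_proj_idem. Qed.

Let J_adj : adjmx J = J.
Proof. by rewrite /J !adjmxB adjmx1 /P adjmxD !adjmx_ketbra. Qed.

Let J_sqr : J *m J = 1%:M.
Proof.
rewrite /J; set Q := 1%:M - P.
have PQ : P *m Q = 0 by rewrite mulmxBr mulmx1 P_idem subrr.
have QP : Q *m P = 0 by rewrite mulmxBl mul1mx P_idem subrr.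
have QQ : Q *m Q = Q by rewrite {1}/Q mulmxBl mul1mx PQ subr0.
have PQ1 : P + Q = 1%:M by rewrite /Q addrC subrK.
clearbody Q; by rewrite mulmxBl !mulmxBr P_idem PQ QP QQ subr0 sub0r opprK.
Qed.

Let J_commute (A : op) : (J *m A = A *m J) <-> (P *m A = A *m P).
Proof.
rewrite /J !mulmxBl !mulmxBr mul1mx mulmx1; split=> [h|->] //.
have : (P *m A) *+ 2 = (A *m P) *+ 2.
  by rewrite !mulr2n; move: (congr1 (fun M => M + A) h); rewrite !opprB !addrA !subrK.
by rewrite -(scaler_nat 2 (P *m A)) -(scaler_nat 2 (A *m P)) => /scalerI; apply; rewrite pnatr_eq0.
Qed.

Let S_spec n : agrees_off_plane (T n) ->
  [/\ posop (S n), S n *m S n = T n & P *m S n = S n *m P].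
Proof.
move=> hA; have [hS hSS] := psqrt_spec hA.1; split => //.
apply/J_commute; apply: (posop_sqrt_commute_involution hS hSS J_adj J_sqr).
by apply/J_commute; exact: P_commute.
Qed.

Let S_plane n : agrees_off_plane (T n) -> forall u, u = pr u -> S n *m u = pr (S n *m u).
Proof. by move=> hA u hu; have [_ _ hc] := S_spec hA; rewrite -PE mulmxA hc -mulmxA PE -hu. Qed.

Let S_perp n : agrees_off_plane (T n) -> forall k, perp2 e f k -> perp2 e f (S n *m k).
Proof.
move=> hA k hk; have [_ _ hc] := S_spec hA; apply: plane_proj_eq0 => //.
by rewrite -PE mulmxA hc -mulmxA PE perp2_plane_proj // mulmx0.
Qed.

Let T_succE n : agrees_off_plane (T n) -> forall v,
  T n.+1 *m v = T n *m v - (tauC * inner e (S n *m v)) *: (S n *m e).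
Proof.
move=> hA v; have [_ hSS _] := S_spec hA.
rewrite hT_succ -/(S n) -!mulmxA mulmxBl mul1mx -scalemxAl ketbraE mulmxBr.
by rewrite -!scalemxAr scalerA mulmxA hSS.
Qed.

(* [<v, T' v> = |S v|^2 - tau |<e, S v>|^2 >= 0] by Cauchy-Schwarz, as [|e| = 1]. *)
Let agrees_off_plane_succ n : agrees_off_plane (T n) -> agrees_off_plane (T n.+1).
Proof.
move=> hA; have [hS hSS _] := S_spec hA.
split; last by move=> k hk; rewrite T_succE // (S_perp hA hk).1 mulr0 scale0r subr0 hA.2.
have tauC_conj : tauC^* = tauC by rewrite ger0_conj // ler0c; case/andP: htau => /ltW.
split.
  by rewrite hT_succ -/(S n) !adjmxM hS.1 adjmxB adjmx1 adjmxZ adjmx_ketbra tauC_conj mulmxA.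
move=> v; rewrite T_succE // innerBr innerZr -hSS -mulmxA.
rewrite (inner_herm hS.1 v) (inner_herm hS.1 v e) -(conj_inner e); set u := S n *m v.
have := cauchy_schwarz e u; rewrite he mul1r -subr_ge0 => cs.
have h1 : 0 <= (1 - tau)%:C%C by rewrite ler0c subr_ge0; case/andP: htau => _ /ltW.
have -> : inner u u - tauC * inner e u * (inner e u)^* =
  (inner u u - inner e u * (inner e u)^*) + (1 - tau)%:C%C * (inner e u * (inner e u)^*).
  by rewrite rmorphB rmorph1 /=; ring.
by rewrite addr_ge0 // mulr_ge0 // mul_conjC_ge0.
Qed.

Let iterate_agrees n : agrees_off_plane (T n).
Proof.
elim: n => [|n IH]; last exact: agrees_off_plane_succ.
by rewrite hT00; split.
Qed.

Let X n := inner e (S n *m e).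
Let Y n := inner f (S n *m f).
Let Z n := inner f (S n *m e).

Let S_e n : S n *m e = X n *: e + Z n *: f.
Proof. by rewrite {1}(S_plane (iterate_agrees n) (esym (plane_proj_e he hef))). Qed.

Let inner_e_S_f n : inner e (S n *m f) = (Z n)^*.
Proof. by have [[hS _] _ _] := S_spec (iterate_agrees n); rewrite (inner_herm hS) -conj_inner. Qed.

Let S_f n : S n *m f = (Z n)^* *: e + Y n *: f.
Proof.
rewrite {1}(S_plane (iterate_agrees n) (esym (plane_proj_f hf hef))).
by rewrite /plane_proj inner_e_S_f.
Qed.

Let X_ge0 n : 0 <= X n. Proof. by have [[_ h] _ _] := S_spec (iterate_agrees n); exact: h. Qed.
Let Y_ge0 n : 0 <= Y n. Proof. by have [[_ h] _ _] := S_spec (iterate_agrees n); exact: h. Qed.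

Let plane_entries n : [/\ Z n * (Z n)^* <= X n * Y n,
  inner e (T n *m e) = X n ^+ 2 + Z n * (Z n)^*,
  inner f (T n *m f) = Y n ^+ 2 + Z n * (Z n)^*
  & inner f (T n *m e) = (X n + Y n) * Z n].
Proof.
have [hS hSS _] := S_spec (iterate_agrees n).
have Xc := ger0_conj (X_ge0 n); have Yc := ger0_conj (Y_ge0 n).
have hfe := inner_fe hef.
split.
- have [Q [[hQ _] hQQ]] := posop_sqrt_exists hS.
  have := cauchy_schwarz (Q *m f) (Q *m e).
  by rewrite -!(inner_herm hQ) !mulmxA hQQ [inner f (S n *m f) * _]mulrC.
- rewrite -hSS -mulmxA (inner_herm hS.1 e) S_e innerDl !innerDr !innerZl !innerZr.
  by rewrite he hf hef hfe Xc; ring.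
- rewrite -hSS -mulmxA (inner_herm hS.1 f) S_f innerDl !innerDr !innerZl !innerZr.
  by rewrite he hf hef hfe Yc conjCK; ring.
- rewrite -hSS -mulmxA (inner_herm hS.1 f) S_f S_e innerDl !innerDr !innerZl !innerZr.
  by rewrite he hf hef hfe Yc conjCK; ring.
Qed.

Let plane_entries_succ n :
  [/\ inner e (T n.+1 *m e) = inner e (T n *m e) - tauC * X n ^+ 2,
      inner f (T n.+1 *m f) = inner f (T n *m f) - tauC * (Z n * (Z n)^*)
    & inner f (T n.+1 *m e) = inner f (T n *m e) - tauC * X n * Z n].
Proof.
have hA := iterate_agrees n.
rewrite !(T_succE hA) !innerBr !innerZr inner_e_S_f -/(X n) -/(Z n).
by split; rewrite // -mulrA ?expr2 // [_^* * _]mulrC.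
Qed.

Let x n := complex.Re (X n).
Let y n := complex.Re (Y n).
Let w n := complex.Re `|Z n|.

Let X_realE n : X n = (x n)%:C%C. Proof. by rewrite /x RRe_real // ger0_real. Qed.
Let Y_realE n : Y n = (y n)%:C%C. Proof. by rewrite /y RRe_real // ger0_real. Qed.
Let normZ_realE n : `|Z n| = (w n)%:C%C. Proof. by rewrite /w RRe_real // normr_real. Qed.
Let Z_normCK n : Z n * (Z n)^* = (w n ^+ 2)%:C%C.
Proof. by rewrite -normCK normZ_realE rmorphXn. Qed.

Let x_ge0 n : 0 <= x n. Proof. by rewrite -ler0c -X_realE. Qed.
Let y_ge0 n : 0 <= y n. Proof. by rewrite -ler0c -Y_realE. Qed.
Let w_ge0 n : 0 <= w n. Proof. by rewrite -ler0c -normZ_realE. Qed.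

Let det_ge0 n : w n ^+ 2 <= x n * y n.
Proof.
by have [cs _ _ _] := plane_entries n; rewrite -lecR -Z_normCK rmorphM /= -X_realE -Y_realE.
Qed.

Let a_realE n : inner e (T n *m e) = (x n ^+ 2 + w n ^+ 2)%:C%C.
Proof.
by have [_ -> _ _] := plane_entries n; rewrite rmorphD rmorphXn /= -X_realE Z_normCK.
Qed.

Let b_realE n : inner f (T n *m f) = (y n ^+ 2 + w n ^+ 2)%:C%C.
Proof.
by have [_ _ -> _] := plane_entries n; rewrite rmorphD rmorphXn /= -Y_realE Z_normCK.
Qed.

Let c_normE n : `|inner f (T n *m e)| = ((x n + y n) * w n)%:C%C.
Proof.
have [_ _ _ ->] := plane_entries n.
by rewrite normrM ger0_norm ?addr_ge0 // normZ_realE X_realE Y_realE -rmorphD -rmorphM.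
Qed.

Let a_step n : x n.+1 ^+ 2 + w n.+1 ^+ 2 = x n ^+ 2 + w n ^+ 2 - tau * x n ^+ 2.
Proof.
have [step _ _] := plane_entries_succ n.
by apply: complexI; rewrite rmorphB rmorphM rmorphXn /= -!a_realE -X_realE.
Qed.

Let b_step n : y n.+1 ^+ 2 + w n.+1 ^+ 2 = y n ^+ 2 + w n ^+ 2 - tau * w n ^+ 2.
Proof.
have [_ step _] := plane_entries_succ n.
by apply: complexI; rewrite rmorphB rmorphM /= -!b_realE -Z_normCK.
Qed.

Let c_step n : (x n.+1 + y n.+1) * w n.+1 = (x n + y n - tau * x n) * w n.
Proof.
have [_ _ step] := plane_entries_succ n; have [_ _ _ cE] := plane_entries n.
apply: complexI; rewrite -c_normE step cE -mulrBl normrM normZ_realE X_realE Y_realE.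
have -> : (x n)%:C%C + (y n)%:C%C - tauC * (x n)%:C%C = (x n + y n - tau * x n)%:C%C.
  by rewrite rmorphB rmorphD rmorphM.
rewrite ger0_norm -?rmorphM // ler0c.
have := x_ge0 n; have := y_ge0 n; case/andP: htau; nra.
Qed.

Let c0_gt0 : 0 < (x 0%N + y 0%N) * w 0%N.
Proof.
have : 0 < `|inner f (T 0%N *m e)| by rewrite normr_gt0 hT00.
by rewrite c_normE -[X in X < _]/((0 : R)%:C%C) ltcR.
Qed.

Let limit_gap n :
  T n - T0 *m (1%:M - P) = ketbra (T n *m e) e + ketbra (T n *m f) f.
Proof.
apply: mx_ext => v; rewrite mulmxBl mulmxDl !ketbraE -mulmxA mulmxBl mul1mx PE.
rewrite -(iterate_agrees n).2; last exact: perp2_subr_plane_proj.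
by rewrite mulmxBr opprB addrC subrK /plane_proj mulmxDr -!scalemxAr.
Qed.

Let limit_gap_coef_le n i j : `|T n i j - (T0 *m (1%:M - P)) i j| <=
  ((x n ^+ 2 + w n ^+ 2) + (y n ^+ 2 + w n ^+ 2) + 2 * ((x n + y n) * w n))%:C%C.
Proof.
have hA := iterate_agrees n.
have -> : T n i j - (T0 *m (1%:M - P)) i j = (T n - T0 *m (1%:M - P)) i j by rewrite !mxE.
rewrite limit_gap mxE !ketbra_coef.
rewrite (plane_invariant hA (esym (plane_proj_e he hef))).
rewrite (plane_invariant hA (esym (plane_proj_f hf hef))) /plane_proj !mxE.
have -> : inner e (T n *m f) = (inner f (T n *m e))^*.
  by rewrite (inner_herm hA.1.1) conj_inner.
apply: le_trans (norm_bilinear2_le _ _ _ _ _ _ _ _) _; rewrite ?norm_conjC ?unit_coord_le1 //.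
rewrite a_realE b_realE c_normE !ger0_norm ?ler0c ?addr_ge0 ?sqr_ge0 //.
by rewrite -!rmorphD lecR; lra.
Qed.

Lemma iterates_cvg : op_cvg T (T0 *m (1%:M - (ketbra e e + ketbra f f))).
Proof.
move=> eps eps0; have epsE : eps = (complex.Re eps)%:C%C by rewrite RRe_real // gtr0_real.
have eps_gt0 : 0 < complex.Re eps by rewrite -ltcR -epsE.
have [N hN] := plane_entries_cvg0 htau x_ge0 y_ge0 w_ge0 det_ge0 a_step b_step c_step
  c0_gt0 eps_gt0.
exists N => n hn i j; apply: le_lt_trans (limit_gap_coef_le n i j) _.
by rewrite epsE ltcR hN.
Qed.

End Iteration.

Unset Implicit Arguments. Set Strict Implicit.

Theorem corollary4p2 (R : realType) (d : nat) (e : 'cV[R[i]]_d) (tau : R)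
  (T0 : 'M[R[i]]_d) (T : nat -> 'M[R[i]]_d) (K : {vspace 'cV[R[i]]_d}) :
  inner e e = 1 ->
  0 < tau < 1 ->
  strictly_posop T0 ->
  T 0%N = T0 ->
  (forall n : nat, T n.+1 =
     psqrt (T n) *m (1%:M - (tau%:C)%C *: ketbra e e) *m psqrt (T n)) ->
  max_reducing_in_perp T0 e K ->
  dim_orth K 2 ->
  exists Tinf : 'M[R[i]]_d,
    [/\ op_cvg T Tinf,
        forall v : 'cV[R[i]]_d, v \in K -> Tinf *m v = T0 *m v &
        forall v : 'cV[R[i]]_d, orthv K v -> Tinf *m v = 0].
Proof.
move=> he htau [hT0 hT0_gt0] hT00 hT_succ hmax [W [hWK dimW]].
have hT0_ge0 : posop T0.
  split=> // v; have [->|v0] := eqVneq v 0; first by rewrite mulmx0 inner0r.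
  exact: ltW (hT0_gt0 v v0).
have [[hKinv _] hsub _] := hmax.
have eW : e \in W by apply/hWK => k /hsub hk; rewrite -conj_inner hk conjC0.
have [f [hf hef hW]] := orthonormal_completion he eW dimW.
have hKperp v : orthv K v <-> v = plane_proj e f v.
  by split=> [/hWK/hW|/hW/hWK].
have hK := max_reducing_perp2 he hf hef hT0 hmax hKperp.
have hT0perp v : perp2 e f v -> perp2 e f (T0 *m v).
  by move=> /hK /hKinv /hK.
have hcoupling := max_reducing_coupling he hf hef hT0 hmax hKperp.
exists (T0 *m (1%:M - (ketbra e e + ketbra f f))); split.
- exact: iterates_cvg he hf hef htau hT0_ge0 hT0perp hcoupling hT00 hT_succ.
- move=> v /hK hv.
  by rewrite -mulmxA mulmxBl mul1mx ketbra_plane_proj perp2_plane_proj // subr0.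
- move=> v /hKperp hv.
  by rewrite -mulmxA mulmxBl mul1mx ketbra_plane_proj -hv subrr mulmx0.
Qed.
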